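(* Let $m\ge2$ and $0<\alpha<1$. An arithmetic box space $\square_{(G_m(N_k))_k}G_m$ has property $D_\alpha$ if and only if there is a constant $c>0$ such that $\operatorname{ord}_m(N_k)\ge c\,N_k^{\alpha/(1-\alpha)}$ for all $k$.
   Context: $G_m$ is the subgroup of $GL_2(\mathbb Z[1/m])$ of matrices $\begin{pmatrix} m^k & r\\ 0&1\end{pmatrix}$, $k\in\mathbb Z$, $r\in\mathbb Z[1/m]$, generated by $A=\begin{pmatrix}1&1\\0&1\end{pmatrix}$, $T=\begin{pmatrix}m&0\\0&1\end{pmatrix}$. For $N$ coprime to $m$, $G_m(N)$ is the kernel of reduction modulo $N$, $G_m\to GL_2(\mathbb Z/N\mathbb Z)$, and $\operatorname{ord}_m(N)$ is the multiplicative order of $m$ modulo $N$. An arithmetic box space of $G_m$ is the family of Cayley graphs $\mathrm{Cay}(G_m/G_m(N_k),\{A,T\})$ where $(N_k)$ is a strictly increasing sequence of integers $\ge2$ coprime to $m$ with $N_k\mid N_{k+1}$. It has property $D_\alpha$ if there is $C>0$ with $\operatorname{diam}\mathrm{Cay}(G_m/G_m(N_k),\{A,T\})\ge C|G_m/G_m(N_k)|^\alpha$ for all $k$. *)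

From HB Require Import structures.
From mathcomp Require Import all_boot all_order all_algebra all_fingroup.
Set Implicit Arguments.
Unset Strict Implicit.
Unset Printing Implicit Defensive.
Import GRing.Theory.

Section Cayley.
Variable gT : finGroupType.
Local Open Scope group_scope.

Definition symgen (S : {set gT}) : {set gT} := S :|: [set s^-1 | s in S].

Definition cball (S : {set gT}) (n : nat) : {set gT} :=
  iter n (fun B => B :|: B * symgen S) [set 1].

(* word length of g (distance from 1 in Cay(<S>, S)); only meaningful for
   g \in <<S>>, for which it is found below #|gT| *)
Definition wordlen (S : {set gT}) (g : gT) : nat :=
  find (fun n => g \in cball S n) (iota 0 #|gT|).

Definition cdist (S : {set gT}) (g h : gT) : nat := wordlen S (g^-1 * h).

Definition cay_diam (S : {set gT}) : nat :=
  \max_(g in <<S>>) \max_(h in <<S>>) cdist S g h.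
End Cayley.

(* G_m / G_m(N) is (first isomorphism theorem) the image of G_m under
   reduction mod N in GL_2(Z/NZ); since G_m = <A, T>, this image is the
   subgroup of GL_2(Z/NZ) generated by the reductions of A and T, and the
   Cayley graph w.r.t. {A, T} is the one w.r.t. their reductions. *)

Definition matA (N : nat) : 'M['Z_N]_2 :=
  \matrix_(i < 2, j < 2) (if (i == 0 :> nat) then 1 else if (j == 1 :> nat) then 1 else 0)%R.
(* A = [[1,1],[0,1]] :  (0,0)->1, (0,1)->1, (1,0)->0, (1,1)->1 *)

Definition matT (m N : nat) : 'M['Z_N]_2 :=
  \matrix_(i < 2, j < 2)
    (if (i == 0 :> nat) && (j == 0 :> nat) then m%:R
     else if (i == 1 :> nat) && (j == 1 :> nat) then 1 else 0)%R.
(* T = [[m,0],[0,1]] *)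

(* elements of GL_2(Z/N); insubd falls back to 1 for a non-invertible matrix,
   which never happens here since det A = 1 and det T = m is a unit mod N
   when m and N are coprime *)
Definition glA (N : nat) : {'GL_2['Z_N]} := insubd (1%g : {'GL_2['Z_N]}) (matA N).
Definition glT (m N : nat) : {'GL_2['Z_N]} := insubd (1%g : {'GL_2['Z_N]}) (matT m N).

Definition genAT (m N : nat) : {set {'GL_2['Z_N]}} := [set glA N; glT m N].

Definition quot (m N : nat) : {set {'GL_2['Z_N]}} := <<genAT m N>>%g.

Definition quot_card (m N : nat) : nat := #|quot m N|.

Definition quot_diam (m N : nat) : nat := cay_diam (genAT m N).

Definition ordm (m N : nat) : nat :=
  #[(insubd (1%g : {unit 'Z_N}) (m%:R : 'Z_N)%R)]%g.

From Stdlib Require Import Reals.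

Definition arith_seq (m : nat) (N : nat -> nat) : Prop :=
  forall k, (2 <= N k)%N /\ coprime (N k) m /\ (N k < N k.+1)%N /\ (N k %| N k.+1)%N.

Definition D_alpha (m : nat) (N : nat -> nat) (alpha : R) : Prop :=
  exists C : R, (0 < C)%R /\
    forall k, (INR (quot_diam m (N k)) >= C * Rpower (INR (quot_card m (N k))) alpha)%R.

(* G_m / G_m(N) is the group of affine maps x |-> a x + b of Z/NZ with a in
   the cyclic group generated by m in (Z/NZ)^x, so it has N * o elements,
   o = ord_m(N).  Its diameter d is comparable to o: each generator changes
   the diagonal entry by at most one power of m, so T^(o/2) needs o/2 letters,
   while writing the translation part in base m (Horner's scheme with A and T)
   reaches every element within o + m (log_2 N + 1) letters.  Hence D_alpha
   says o >~ (N o)^alpha, i.e. o >~ N^(alpha/(1-alpha)); conversely, the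
   additive m log N term only matters when o <~ log N, and then
   N^alpha <~ log N bounds N. *)

From mathcomp Require Import all_boot all_algebra all_fingroup.
From mathcomp Require Import cyclic zify.

Set Implicit Arguments.
Unset Strict Implicit.
Unset Printing Implicit Defensive.
Import GRing.Theory FinRing.Theory.

Section CayleyBalls.
Variables (gT : finGroupType) (S : {set gT}).
Local Open Scope group_scope.

Lemma cballS n : cball S n.+1 = cball S n :|: cball S n * symgen S.
Proof. by []. Qed.

Lemma cball_sub n n' : n <= n' -> cball S n \subset cball S n'.
Proof.
move/subnKC <-; elim: (n' - n) => [|k IH]; first by rewrite addn0.
by apply: subset_trans IH _; rewrite addnS cballS subsetUl.
Qed.

Lemma cball1 n : 1 \in cball S n.
Proof. exact: subsetP (cball_sub (leq0n n)) _ (set11 1). Qed.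

Lemma mem_cball_mull n s g :
  s \in symgen S -> g \in cball S n -> s * g \in cball S n.+1.
Proof.
move=> Ss; elim: n g => [|n IH] g.
  move/set1P ->; rewrite mulg1 cballS; apply/setUP; right.
  by rewrite -[s]mul1g; apply: mem_mulg; rewrite ?set11.
rewrite cballS => /setUP[/IH | /mulsgP[h t Bh St ->]].
  by apply/subsetP/cball_sub.
by rewrite mulgA cballS; apply/setUP; right; apply: mem_mulg => //; apply: IH.
Qed.

Lemma mem_cball_expgl n d s g :
  s \in symgen S -> g \in cball S n -> s ^+ d * g \in cball S (n + d).
Proof.
move=> Ss Bg; elim: d => [|d IH]; first by rewrite mul1g addn0.
by rewrite expgS -mulgA addnS; apply: mem_cball_mull.
Qed.

Lemma wordlen_leq n g : g \in cball S n -> wordlen S g <= n.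
Proof.
move=> Bg; have [ltnT | leTn] := ltnP n #|gT|.
  by rewrite leqNgt; apply/negP => /(before_find 0); rewrite nth_iota // add0n Bg.
by apply: leq_trans leTn; rewrite -[X in _ <= X](size_iota 0) find_size.
Qed.

Lemma wordlen_geq j g :
  j <= #|gT| -> (forall i, i < j -> g \notin cball S i) -> j <= wordlen S g.
Proof.
move=> ljT notB; rewrite /wordlen; set f := find _ _.
have [ltf | ] := ltnP f (size (iota 0 #|gT|)); last by rewrite size_iota; exact: leq_trans.
have := nth_find 0 (a := fun n => g \in cball S n) (s := iota 0 #|gT|).
rewrite has_find => /(_ ltf); rewrite size_iota in ltf; rewrite nth_iota // add0n -/f.
by rewrite leqNgt; apply: contraL => /notB.
Qed.

Lemma cay_diam_leq B : {in <<S>>, forall g, wordlen S g <= B} -> cay_diam S <= B.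
Proof.
move=> lenB; apply/bigmax_leqP => g Sg; apply/bigmax_leqP => h Sh.
by apply: lenB; rewrite groupM ?groupV.
Qed.

Lemma wordlen_leq_diam g : g \in <<S>> -> wordlen S g <= cay_diam S.
Proof.
move=> Sg; apply: leq_trans (leq_bigmax_cond _ (group1 <<S>>)).
by apply: leq_trans (leq_bigmax_cond _ Sg); rewrite /cdist invg1 mul1g.
Qed.

End CayleyBalls.

Section AffineMatrices.
Variable R : finComUnitRingType.
Local Open Scope ring_scope.
Local Notation GL := ({'GL_2[R]} : finGroupType).
Implicit Types (a b c d : R) (g h : GL).

Definition affine_mx a b : 'M[R]_2 :=
  \matrix_(i < 2, j < 2) if i == 0 then if j == 0 then a else b
                         else if j == 0 then 0 else 1.

Lemma mulmx22 (A B : 'M[R]_2) i j : (A *m B) i j = A i 0 * B 0 j + A i 1 * B 1 j.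
Proof.
rewrite mxE !big_ord_recr big_ord0 /= add0r.
by congr (A i _ * B _ j + A i _ * B _ j); apply: val_inj.
Qed.

Lemma affine_mxM a b c d :
  affine_mx a b *m affine_mx c d = affine_mx (a * c) (a * d + b).
Proof.
apply/matrixP => i j; rewrite mulmx22 !mxE.
by case: i => [[|[|i]] ?]; case: j => [[|[|j]] ?] //=;
  rewrite ?(mulr0, mul0r, mulr1, mul1r, addr0, add0r).
Qed.

Lemma affine_mx10 : affine_mx 1 0 = 1%:M.
Proof.
by apply/matrixP => i j; rewrite !mxE; case: i => [[|[|i]] ?]; case: j => [[|[|j]] ?].
Qed.

Lemma affine_mx_inv a b : a \is a GRing.unit ->
  affine_mx a^-1 (- (a^-1 * b)) *m affine_mx a b = 1%:M.
Proof. by move=> ua; rewrite affine_mxM mulVr // addrN affine_mx10. Qed.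

Lemma affine_mx_unit a b : a \is a GRing.unit -> affine_mx a b \in unitmx.
Proof. by move=> ua; have [] := mulmx1_unit (affine_mx_inv b ua). Qed.

Definition affine g a b := GLval g = affine_mx a b.

Lemma affine1 : affine 1 1 0.
Proof. by rewrite /affine GL_1E affine_mx10. Qed.

Lemma affineM g h a b c d :
  affine g a b -> affine h c d -> affine (g * h)%g (a * c) (a * d + b).
Proof. by move=> Ag Ah; rewrite /affine GL_MxE Ag Ah affine_mxM. Qed.

Lemma affineV g a b : a \is a GRing.unit ->
  affine g a b -> affine g^-1%g a^-1 (- (a^-1 * b)).
Proof.
move=> ua Ag; rewrite /affine GL_VxE Ag.
have uA := affine_mx_unit b ua.
by rewrite -[invmx _]mul1mx -(affine_mx_inv b ua) -mulmxA mulmxV // mulmx1.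
Qed.

Lemma affine_inj g h a b : affine g a b -> affine h a b -> g = h.
Proof. by move=> Ag Ah; apply: val_inj; rewrite /= Ag Ah. Qed.

Lemma affine_entries g a b : affine g a b -> GLval g 0 0 = a /\ GLval g 0 1 = b.
Proof. by move->; rewrite !mxE. Qed.

Lemma affineX_diag g a n : affine g a 0 -> affine (g ^+ n)%g (a ^+ n) 0.
Proof.
move=> Ag; elim: n => [|n IH]; first exact: affine1.
by rewrite expgS exprS; have := affineM Ag IH; rewrite mulr0 add0r.
Qed.

Lemma affineX_unipotent g b n : affine g 1 b -> affine (g ^+ n)%g 1 (b *+ n).
Proof.
move=> Ag; elim: n => [|n IH]; first by rewrite mulr0n; exact: affine1.
by rewrite expgS mulrS; have := affineM Ag IH; rewrite !mul1r addrC.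
Qed.

End AffineMatrices.

Section ArithmeticQuotient.
Variables m N : nat.
Hypotheses (N_gt1 : 1 < N) (coprime_Nm : coprime N m).
Local Open Scope ring_scope.
Local Notation GL := ({'GL_2['Z_N]} : finGroupType).
Local Notation A := (glA N : GL).
Local Notation T := (glT m N : GL).

Lemma unit_m : (m%:R : 'Z_N) \is a GRing.unit.
Proof. by rewrite unitZpE // coprime_sym. Qed.

Definition mu : {unit 'Z_N} := insubd (1%g : {unit 'Z_N}) (m%:R : 'Z_N).

Lemma val_mu : val mu = m%:R.
Proof. exact: insubdK unit_m. Qed.

Lemma matA_affine : matA N = affine_mx 1 1.
Proof.
by apply/matrixP => i j; rewrite !mxE; case: i => [[|[|i]] ?]; case: j => [[|[|j]] ?].
Qed.

Lemma matT_affine : matT m N = affine_mx m%:R 0.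
Proof.
by apply/matrixP => i j; rewrite !mxE; case: i => [[|[|i]] ?]; case: j => [[|[|j]] ?].
Qed.

Lemma affineA : affine A 1 1.
Proof. by rewrite /affine /glA matA_affine insubdK // affine_mx_unit ?unitr1. Qed.

Lemma affineT : affine T (val mu) 0.
Proof. by rewrite /affine /glT matT_affine val_mu insubdK // affine_mx_unit ?unit_m. Qed.

Lemma affineAXTX (b k : nat) :
  affine (A ^+ b * T ^+ k)%g (val (mu ^+ k)%g) b%:R.
Proof.
have := affineM (affineX_unipotent b affineA) (affineX_diag k affineT).
by rewrite val_unitX mul1r mulr0 add0r.
Qed.

Definition affine_cycle : {set GL} :=
  [set g : GL | [exists w in <[mu]>%g, exists b, GLval g == affine_mx (val w) b]].

Lemma affine_cycleP g :
  reflect (exists2 w, w \in <[mu]>%g & exists b, affine g (val w) b) (g \in affine_cycle).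
Proof.
rewrite inE; apply: (iffP exists_inP) => [[w Mw /existsP[b /eqP]] | [w Mw [b Ag]]].
  by exists w => //; exists b.
by exists w => //; apply/existsP; exists b; apply/eqP.
Qed.

Lemma group_set_affine_cycle : group_set affine_cycle.
Proof.
apply/andP; split.
  by apply/affine_cycleP; exists 1%g; [exact: group1 | exists 0; exact: affine1].
apply/subsetP => _ /mulsgP[g h /affine_cycleP[w Mw [b Ag]] /affine_cycleP[v Mv [c Ah]] ->].
apply/affine_cycleP; exists (w * v)%g; first exact: groupM.
by exists (val w * c + b); rewrite val_unitM; exact: affineM.
Qed.

Canonical affine_cycle_group := Group group_set_affine_cycle.

Lemma quot_sub_affine_cycle : quot m N \subset affine_cycle.
Proof.
rewrite /quot gen_subG; apply/subsetP => g /set2P[] ->; apply/affine_cycleP.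
  by exists 1%g; [exact: group1 | exists 1; exact: affineA].
by exists mu; [exact: cycle_id | exists 0; exact: affineT].
Qed.

Lemma card_quot : quot_card m N = (N * ordm m N)%N.
Proof.
pose f (g : GL) := (GLval g 0 1, insubd (1%g : {unit 'Z_N}) (GLval g 0 0)).
have sub := subsetP quot_sub_affine_cycle.
have f_inj : {in quot m N &, injective f}.
  move=> g h /sub/affine_cycleP[w _ [b Ag]] /sub/affine_cycleP[v _ [c Ah]] [].
  have [-> ->] := affine_entries Ag; have [-> ->] := affine_entries Ah.
  by rewrite !valKd => eb ew; subst; exact: affine_inj Ag Ah.
rewrite /quot_card -(card_in_imset f_inj).
have -> : f @: quot m N = setX [set: 'Z_N] <[mu]>%g.
  apply/setP => -[z w]; rewrite !inE /=; apply/imsetP/cycleP.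
    case=> g /sub/affine_cycleP[v Mv [b Ag]] [_ ->].
    by have [-> _] := affine_entries Ag; rewrite valKd; exact/cycleP.
  case=> k ->; exists (A ^+ z * T ^+ k)%g.
    by apply: groupM; apply: groupX; apply: mem_gen; [exact: set21 | exact: set22].
  rewrite /f; have [-> ->] := affine_entries (affineAXTX z k).
  by rewrite natr_Zp valKd.
by rewrite cardsX cardsT card_ord Zp_cast.
Qed.

Local Notation S := (genAT m N).

Lemma A_symgen : A \in symgen S.
Proof. by apply/setUP; left; exact: set21. Qed.

Lemma T_symgen : T \in symgen S.
Proof. by apply/setUP; left; exact: set22. Qed.

Lemma symgen_affine s : s \in symgen S ->
  exists2 w, w \in [set 1; mu; mu^-1]%g & exists b, affine s (val w) b.
Proof.
have unit_mu : val mu \is a GRing.unit := valP mu.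
rewrite /symgen => /setUP[/set2P[]-> | /imsetP[t /set2P[]-> ->]].
- by exists 1%g; [rewrite !inE eqxx | exists 1; exact: affineA].
- by exists mu; [rewrite !inE eqxx orbT | exists 0; exact: affineT].
- exists 1%g; first by rewrite !inE eqxx.
  by have := affineV (unitr1 _) affineA; rewrite invr1; exists (- (1 * 1)).
- exists mu^-1%g; first by rewrite !inE eqxx !orbT.
  by rewrite val_unitV; exists (- ((val mu)^-1 * 0)); exact: affineV affineT.
Qed.

Lemma cball_affine i g : g \in cball S i -> exists a b, (a + b <= i)%N /\
  exists r, affine g (val (mu ^+ a * (mu ^+ b)^-1))%g r.
Proof.
elim: i g => [|i IH] g.
  move/set1P ->; exists 0%N, 0%N; split=> //; exists 0.
  by rewrite expg0 invg1 mulg1; exact: affine1.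
rewrite cballS => /setUP[/IH[a [b [leab Ag]]] | /mulsgP[h s Bh Ss ->]].
  by exists a, b; split=> //; exact: leqW.
have [a [b [leab [r Ah]]]] := IH h Bh; have [w Ew [c As]] := symgen_affine Ss.
have Ahs := affineM Ah As; rewrite -val_unitM in Ahs.
move: Ew; rewrite !inE -orbA => /or3P[] /eqP Ew; rewrite {}Ew in Ahs.
- by rewrite mulg1 in Ahs; exists a, b; split; [exact: leqW | eexists; exact: Ahs].
- exists a.+1, b; split; first by rewrite addSn.
  rewrite -mulgA -(commuteV (commuteX b (commute_refl mu))) mulgA -expgSr in Ahs.
  by eexists; exact: Ahs.
- exists a, b.+1; split; first by rewrite addnS.
  by rewrite -mulgA -invMg -expgS in Ahs; eexists; exact: Ahs.
Qed.

Lemma ordm_leq_diam : (ordm m N <= 3 * quot_diam m N)%N.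
Proof.
have -> : ordm m N = #[mu]%g by [].
set o := #[mu]%g; have o_gt0 : (0 < o)%N := order_gt0 mu.
have leoQ : (o <= #|quot m N|)%N.
  by rewrite -[#|_|]/(quot_card m N) card_quot leq_pmull //; exact: ltnW.
have leoT := leq_trans leoQ (max_card _).
have diam_ge1 : (1 <= quot_diam m N)%N.
  apply: leq_trans (wordlen_leq_diam (mem_gen (set21 A T))).
  apply: wordlen_geq => [|[|//] _]; first exact: leq_trans leoT.
  apply/set1P => A1; have [_] := affine_entries affineA; rewrite A1.
  by have [_ ->] := affine_entries (affine1 'Z_N) => /eqP; rewrite eq_sym oner_eq0.
have diam_ge_half : (o %/ 2 <= quot_diam m N)%N.
  apply: leq_trans (wordlen_leq_diam (groupX (o %/ 2) (mem_gen (set22 A T)))).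
  apply: wordlen_geq => [|i lti]; first exact: leq_trans (leq_div o 2) leoT.
  apply/negP => /cball_affine[a [b [leab [r Ar]]]].
  have [diagT _] := affine_entries (affineX_diag (o %/ 2) affineT).
  have [diag _] := affine_entries Ar.
  have e := etrans (esym diagT) diag.
  have : (mu ^+ (o %/ 2) * mu ^+ b = mu ^+ a)%g.
    apply: val_inj; rewrite val_unitM val_unitX e val_unitM val_unitV mulrVK //.
    exact: valP.
  move/eqP; rewrite -expgD eq_expg_mod_order !modn_small -/o; lia.
lia.
Qed.

Hypothesis m_gt1 : (1 < m)%N.

Lemma cball_affine_horner D r w : (r < m ^ D)%N -> w \in <[mu]>%g ->
  exists2 g, g \in cball S (ordm m N + m * D) & affine g (val w) r%:R.
Proof.
elim: D r w => [|D IH] r w ltr Mw.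
  have -> : r = 0%N by move: ltr; rewrite expn0; lia.
  case/cycleP: Mw => k ->; rewrite -expg_mod_order.
  exists (T ^+ (k %% #[mu]%g) * 1)%g.
    apply: (subsetP (cball_sub _ _)) _ (mem_cball_expgl _ T_symgen (cball1 _ 0)).
    by rewrite muln0 addn0 add0n; apply/ltnW/ltn_pmod/order_gt0.
  by rewrite mulg1 val_unitX; exact: affineX_diag affineT.
(* Horner step: r = m (r / m) + r mod m, and A^(r mod m) T prepends a digit. *)
have ltq : (r %/ m < m ^ D)%N by rewrite ltn_divLR ?(ltnW m_gt1) // -expnSr.
have Mw' : (mu^-1 * w)%g \in <[mu]>%g by rewrite groupM ?groupV ?cycle_id.
have [g Bg Ag] := IH _ _ ltq Mw'.
exists (A ^+ (r %% m) * (T * g))%g.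
  apply: (subsetP (cball_sub _ _)) _
    (mem_cball_expgl _ A_symgen (mem_cball_mull T_symgen Bg)).
  by have := ltn_pmod r (ltnW m_gt1); rewrite mulnS; lia.
have -> : r%:R = m%:R * (r %/ m)%:R + (r %% m)%:R :> 'Z_N.
  by rewrite {1}(divn_eq r m) natrD natrM mulrC.
have := affineM (affineX_unipotent (r %% m) affineA) (affineM affineT Ag).
by rewrite val_unitM val_unitV mulVKr ?(valP mu) // !mul1r addr0 val_mu.
Qed.

Lemma diam_leq_ordm : (quot_diam m N <= ordm m N + m * (trunc_log 2 N).+1)%N.
Proof.
apply: cay_diam_leq => g Qg.
have /affine_cycleP[w Mw [b Ag]] := subsetP quot_sub_affine_cycle g Qg.
have ltb : (b < m ^ (trunc_log 2 N).+1)%N.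
  have ltbN : (b < N)%N by have := ltn_ord b; rewrite {2}Zp_cast.
  apply: leq_trans ltbN (ltnW (leq_trans (trunc_log_ltn N (isT : (1 < 2)%N)) _)).
  by rewrite leq_exp2r.
have [g' Bg' Ag'] := cball_affine_horner ltb Mw.
by rewrite natr_Zp in Ag'; rewrite (affine_inj Ag Ag'); exact: wordlen_leq.
Qed.

End ArithmeticQuotient.

From Stdlib Require Import Reals Lra.

Section PowerBounds.
Local Open Scope R_scope.

Lemma Rpower_gt0 x y : 0 < Rpower x y.
Proof. exact: exp_pos. Qed.

Lemma ln_le_iff x y : 0 < x -> 0 < y -> ln x <= ln y <-> x <= y.
Proof.
move=> hx hy; split=> h.
- by apply: Rnot_lt_le => /(ln_increasing _ _ hy); lra.
- by apply: Rnot_lt_le => /(ln_lt_inv _ _ hy hx); lra.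
Qed.

Lemma ln_le_Rpower x e : 0 < x -> 0 < e -> e * ln x <= Rpower x e.
Proof.
move=> hx he; rewrite -ln_Rpower.
have := exp_ineq1_le (ln (Rpower x e)); rewrite exp_ln; [lra | exact: Rpower_gt0].
Qed.

Lemma ln_mul_Rpower c x y : 0 < c -> ln (c * Rpower x y) = ln c + y * ln x.
Proof. by move=> hc; rewrite ln_mult ?ln_Rpower //; exact: Rpower_gt0. Qed.

Lemma Rpower_bound_iff a c n o : 0 < a < 1 -> 0 < c -> 0 < n -> 0 < o ->
  c * Rpower n (a / (1 - a)) <= o <-> Rpower c (1 - a) * Rpower (n * o) a <= o.
Proof.
move=> ha hc hn ho.
have hpos x y z : 0 < x -> 0 < x * Rpower y z.
  by move=> hx; apply: Rmult_lt_0_compat => //; exact: Rpower_gt0.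
rewrite -(ln_le_iff (hpos _ n (a / (1 - a)) hc) ho).
rewrite -(ln_le_iff (hpos _ (n * o) a (Rpower_gt0 c (1 - a))) ho).
rewrite !ln_mul_Rpower ?ln_Rpower ?ln_mult //; last exact: Rpower_gt0.
set L := ln c + _ * ln n.
have -> : (1 - a) * ln c + a * (ln n + ln o) = (1 - a) * L + a * ln o.
  by rewrite /L; field; lra.
split=> h.
- by have := Rmult_le_compat_l (1 - a) _ _ (ltac:(lra)) h; lra.
- by apply: (Rmult_le_reg_l (1 - a)); lra.
Qed.

Lemma Rpower_log_bounded a K : 0 < a -> exists B, forall n (t : nat),
  1 <= n -> 2 ^ t <= n -> Rpower n a <= K * (INR t + 1) -> n <= B.
Proof.
move=> ha; set Kb := K * (4 / a + 1).
exists (Rpower Kb (2 / a)) => n t hn htn hnK.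
have hn0 : 0 < n by lra.
(* With Y = n^(a/2): t <= 2 ln n <= (4/a) Y, hence Y^2 <= Kb Y. *)
set Y := Rpower n (a / 2).
have hY1 : 1 <= Y.
  rewrite -(Rpower_O n) //; apply: Rle_Rpower => //; lra.
have hnY : n = Rpower Y (2 / a).
  by rewrite Rpower_mult -{1}(Rpower_1 _ hn0); congr Rpower; field; lra.
have hYY : Rpower n a = Y * Y by rewrite -Rpower_plus; congr Rpower; field.
have htY : INR t <= 4 / a * Y.
  have h2t : INR t * ln 2 <= ln n.
    rewrite -ln_pow; last lra.
    by apply/ln_le_iff => //; apply: pow_lt; lra.
  have hlnn : ln n <= 2 / a * Y.
    apply: (Rmult_le_reg_l (a / 2)); first lra.
    have -> : a / 2 * (2 / a * Y) = Y by field; lra.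
    by apply: ln_le_Rpower; lra.
  have := ln_lt_2; have := pos_INR t; nra.
have hYK : Y * Y <= Kb * Y.
  have ht1 : 0 < INR t + 1 by have := pos_INR t; lra.
  have hK : 0 < K.
    apply: Rnot_le_lt => hK; have := Rpower_gt0 n a; nra.
  rewrite -hYY; apply: Rle_trans hnK _.
  have -> : Kb * Y = K * (4 / a * Y + Y) by rewrite /Kb; ring.
  apply: Rmult_le_compat_l; lra.
have h2a : 0 < 2 / a by apply: Rdiv_lt_0_compat; lra.
rewrite hnY; apply: Rle_Rpower_l; first lra.
split; first lra.
by apply: (Rmult_le_reg_r Y); lra.
Qed.

Lemma ord_lower_of_diam_upper a C m : 0 < a < 1 -> 0 < C ->
  exists c, 0 < c /\ forall n o d (t : nat), 1 <= n -> 1 <= o -> 2 ^ t <= n ->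
    C * Rpower (n * o) a <= d -> d <= o + m * (INR t + 1) ->
    c * Rpower n (a / (1 - a)) <= o.
Proof.
move=> ha hC; set q := a / (1 - a).
have [B hB] := Rpower_log_bounded (2 * m / C) (proj1 ha).
set c1 := Rpower (C / 2) (/ (1 - a)); set c2 := / Rpower (Rmax 1 B) q.
have hc1 : 0 < c1 by exact: Rpower_gt0.
have hc2 : 0 < c2 by apply: Rinv_0_lt_compat; exact: Rpower_gt0.
exists (Rmin c1 c2); split; first exact: Rmin_glb_lt.
move=> n o d t hn ho htn hlow hup.
have hnq : 0 <= Rpower n q by apply: Rlt_le; exact: Rpower_gt0.
(* Either the additive term is dominated by o, or o < m (t + 1) and then
   n^a = O(log n) bounds n. *)
have [hmo | hmo] := Rle_or_lt (m * (INR t + 1)) o.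
- apply: Rle_trans (Rmult_le_compat_r _ _ _ hnq (Rmin_l c1 c2)) _.
  apply/Rpower_bound_iff; try lra.
  rewrite /c1 Rpower_mult (_ : / (1 - a) * (1 - a) = 1); last by field; lra.
  rewrite Rpower_1; lra.
- apply: Rle_trans (Rmult_le_compat_r _ _ _ hnq (Rmin_r c1 c2)) _.
  have hnB : n <= Rmax 1 B.
    apply: Rle_trans (Rmax_r 1 B); apply: (hB n t) => //.
    have hno : Rpower n a <= Rpower (n * o) a.
      by apply: Rle_Rpower_l; [lra | split; nra].
    apply: (Rmult_le_reg_l C) => //.
    have -> : C * (2 * m / C * (INR t + 1)) = 2 * (m * (INR t + 1)) by field; lra.
    nra.
  apply: Rle_trans ho; apply: (Rmult_le_reg_l (Rpower (Rmax 1 B) q)); first exact: Rpower_gt0.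
  rewrite /c2 -Rmult_assoc Rinv_r; last exact/Rgt_not_eq/Rpower_gt0.
  rewrite Rmult_1_l Rmult_1_r; apply: Rle_Rpower_l; last lra.
  by apply: Rlt_le; apply: Rdiv_lt_0_compat; lra.
Qed.

End PowerBounds.

Lemma INR_addn a b : INR (a + b) = (INR a + INR b)%R.
Proof. exact: plus_INR. Qed.

Lemma INR_muln a b : INR (a * b) = (INR a * INR b)%R.
Proof. exact: mult_INR. Qed.

Lemma INR_expn a n : INR (expn a n) = (INR a ^ n)%R.
Proof. by elim: n => [|n IH]; rewrite ?expnS ?INR_muln ?IH. Qed.

Lemma INR_leq a b : a <= b -> (INR a <= INR b)%R.
Proof. by move/leP; exact: le_INR. Qed.

Theorem proposition3p4 (m : nat) (alpha : R) (N : nat -> nat) :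
  (2 <= m)%N -> (0 < alpha < 1)%R -> arith_seq m N ->
  (D_alpha m N alpha <->
   exists c : R, (0 < c)%R /\
     forall k, (INR (ordm m (N k)) >= c * Rpower (INR (N k)) (alpha / (1 - alpha)))%R).
Proof.
move=> m_ge2 alpha01 Nseq.
have N_gt1 k : 1 < N k by case: (Nseq k).
have coprime_Nm k : coprime (N k) m by case: (Nseq k) => _ [].
have N_ge1 k : (1 <= INR (N k))%R by apply: (INR_leq (ltnW (N_gt1 k))).
have ordm_ge1 k : (1 <= INR (ordm m (N k)))%R by apply: (INR_leq (order_gt0 _)).
have card_eq k : INR (quot_card m (N k)) = (INR (N k) * INR (ordm m (N k)))%R.
  by rewrite card_quot // INR_muln.
split=> [[C [C_gt0 DC]] | [c [c_gt0 ordc]]].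
- have [c [c_gt0 lower]] := ord_lower_of_diam_upper (INR m) alpha01 C_gt0.
  exists c; split=> // k; apply/Rle_ge/(lower _ _ _ (trunc_log 2 (N k))) => //.
  + rewrite -[2%R]/(INR 2) -INR_expn; apply: INR_leq; apply: trunc_logP => //.
    exact: ltnW (N_gt1 k).
  + by rewrite -card_eq; exact/Rge_le/DC.
  + have := INR_leq (diam_leq_ordm (N_gt1 k) (coprime_Nm k) m_ge2).
    by rewrite INR_addn INR_muln S_INR.
- exists (Rpower c (1 - alpha) / 3)%R; split.
    by apply: Rdiv_lt_0_compat; [exact: Rpower_gt0 | lra].
  move=> k; apply: Rle_ge; rewrite card_eq.
  have := INR_leq (ordm_leq_diam (N_gt1 k) (coprime_Nm k)); rewrite INR_muln /=.
  have pos x : (1 <= x -> 0 < x)%R by lra.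
  have := Rpower_bound_iff alpha01 c_gt0 (pos _ (N_ge1 k)) (pos _ (ordm_ge1 k)).
  move=> /proj1 /(_ (Rge_le _ _ (ordc k))).
  lra.
Qed.
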